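(* Let $V$ be a complex Hermitian vector space of dimension $N$ with a fixed orthonormal basis $e_1,\ldots,e_N$. For $S\subset\{1,\ldots,N\}$ let $\mathcal L_S=\mathrm{span}\{e_i\}_{i\in S}$, and let $\mathcal L_S^*\subset\mathcal L_S$ be the set of vectors all of whose coordinates with respect to $\{e_i\}_{i\in S}$ are non-zero. Let $K,M$ be positive integers with $K\le N-M$. Then for any $w\in\mathcal L^*_{\{1,\ldots,K\}}$, a generic $M$-dimensional linear subspace $\mathcal L\in\mathrm{Gr}_w(M,V)$ satisfies: (1) $\mathcal L\cap\mathcal L_{\{1,\ldots,K\}}$ is the line spanned by $w$; (2) $\mathcal L\cap\mathcal L_S=\{0\}$ for every $S\subset\{1,\ldots,N\}$ with $|S|=K$ and $S\ne\{1,\ldots,K\}$.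
   Context: $\mathrm{Gr}_w(M,V)$ denotes the subvariety of the Grassmannian of $M$-dimensional linear subspaces of $V$ consisting of those subspaces containing $w$. ''Generic'' means: for all $\mathcal L$ outside a proper algebraic (Zariski-closed) subset of $\mathrm{Gr}_w(M,V)$. *)

From HB Require Import structures.
From mathcomp Require Import all_boot all_order all_algebra.
From mathcomp Require Import Rstruct complex.
From mathcomp Require Import mpoly.

Set Implicit Arguments.
Unset Strict Implicit.
Unset Printing Implicit Defensive.

Import GRing.Theory.
Local Open Scope ring_scope.

Definition CC : fieldType := (Rdefinitions.R)[i].

(* V = C^N, vectors are row vectors 'rV[CC]_N, coordinates w.r.t. the
   standard (orthonormal) basis e_0, ..., e_{N-1}.  An M-dimensional linear
   subspace L of V is represented by a full-row-rank M x N matrix B whose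
   rows form a basis of L (L = row space of B). *)

Definition LS (N : nat) (S : {set 'I_N}) : 'M[CC]_N :=
  diag_mx (\row_i (if i \in S then 1 else 0)).

Definition in_LS_star (N : nat) (S : {set 'I_N}) (v : 'rV[CC]_N) : Prop :=
  (v <= LS S)%MS /\ (forall i, i \in S -> v 0 i != 0).

(* The index set {1,...,K} of the paper, shifted to {0,...,K-1}. *)
Definition first_set (N K : nat) : {set 'I_N} := [set i : 'I_N | (i < K)%N].

(* Points of Gr_w(M,V): full-row-rank M x N matrices whose row space contains
   w.  (Two matrices represent the same point iff they have the same row
   space; all predicates below only depend on the row space.) *)
Definition in_Grw (M N : nat) (w : 'rV[CC]_N) (B : 'M[CC]_(M, N)) : Prop :=
  row_free B /\ (w <= B)%MS.

(* Plücker coordinates are indexed by all subsets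
   of 'I_N (via enum_val); those with #|I| <> M are identically zero and play
   no role. *)
Definition minor (M N : nat) (B : 'M[CC]_(M, N)) (I : {set 'I_N}) : CC :=
  if #|I| == M then
    \det (\matrix_(i < M, j < M) nth 0 [seq B i k | k <- enum I] j)
  else 0.

Definition nPl (N : nat) : nat := #|{set 'I_N}|.

Definition plucker (M N : nat) (B : 'M[CC]_(M, N)) : 'I_(nPl N) -> CC :=
  fun k => minor B (enum_val k).

(* Zariski-closed subsets of Gr_w(M,V) (for the Zariski topology induced from
   the Plücker embedding of Gr(M,V) into projective space): common zero loci,
   on Gr_w(M,V), of a family of homogeneous polynomials in the Plücker
   coordinates. *)
Definition zariski_closed_in_Grw (M N : nat) (w : 'rV[CC]_N)
    (Z : 'M[CC]_(M, N) -> Prop) : Prop :=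
  exists F : {mpoly CC[nPl N]} -> Prop,
    (forall p, F p -> exists d, p \is d.-homog) /\
    (forall B, in_Grw w B ->
       (Z B <-> (forall p, F p -> p.@[plucker B] = 0))).

Definition generic_in_Grw (M N : nat) (w : 'rV[CC]_N)
    (P : 'M[CC]_(M, N) -> Prop) : Prop :=
  exists Z : 'M[CC]_(M, N) -> Prop,
    [/\ zariski_closed_in_Grw w Z,
        (exists B, in_Grw w B /\ ~ Z B) &
        (forall B, in_Grw w B -> ~ Z B -> P B)].

From HB Require Import structures.
From mathcomp Require Import all_boot all_order all_algebra.
From mathcomp Require Import Rstruct complex.
From mathcomp Require Import mpoly.
From mathcomp Require Import zify.

(* Suppose the minor of B on every M-set I of coordinates meeting A = {1..K}
   is non-zero.  A vector of L vanishing on such an I is zero, and since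
   #|~: S| >= N - K >= M, such an I can be found inside {a} ∪ ~: S with a in
   A \ S, which gives (2), or inside {j} ∪ ~: A with j in A, which gives (1)
   for v - c w, with c chosen to cancel coordinate j.  These conditions define
   the complement of the zero set of a single Plücker monomial, which meets
   Gr_w: each minor is non-zero at a matrix whose first row is w and whose
   other rows are unit vectors, and finitely many such conditions can be met
   at once. *)

Set Implicit Arguments.
Unset Strict Implicit.
Unset Printing Implicit Defensive.

Import GRing.Theory.
Local Open Scope ring_scope.

Section Minors.

Variables M N : nat.
Implicit Types (B D : 'M[CC]_(M, N)) (I : {set 'I_N}) (v : 'rV[CC]_N).

Definition minor_cols I (cI : #|I| = M) (j : 'I_M) : 'I_N :=
  enum_val (cast_ord (esym cI) j).

Lemma minor_colsub B I (cI : #|I| = M) :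
  minor B I = \det (colsub (minor_cols cI) B).
Proof.
rewrite /minor cI eqxx; congr (\det _); apply/matrixP => i j; rewrite !mxE.
rewrite (nth_map (minor_cols cI j)) -?cardE ?cI //.
by rewrite /minor_cols [in RHS](enum_val_nth (minor_cols cI j)).
Qed.

Lemma colsub_minor_cols_eq0 I (cI : #|I| = M) v :
  colsub (minor_cols cI) v = 0 <-> {in I, forall k, v 0 k = 0}.
Proof.
split=> [v0 k kI | v0]; last by apply/rowP => j; rewrite !mxE v0 ?enum_valP.
have := congr1 (fun u : 'rV_M => u 0 (cast_ord cI (enum_rank_in kI k))) v0.
by rewrite !mxE /minor_cols cast_ordK enum_rankK_in.
Qed.

Lemma minor_neq0P B I : #|I| = M ->
  minor B I != 0 <->
  (forall x : 'rV_M, {in I, forall k, (x *m B) 0 k = 0} -> x = 0).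
Proof.
move=> cI; rewrite (minor_colsub B cI) -unitfE -unitmxE -row_free_unit.
split=> [/row_free_inj injB x /(colsub_minor_cols_eq0 cI) | injB].
  by move=> v0; apply: injB; rewrite mulmx_colsub v0 mul0mx.
apply/inj_row_free => x; rewrite mulmx_colsub => /(colsub_minor_cols_eq0 cI).
exact: injB.
Qed.

Lemma minor_neq0_card B I : minor B I != 0 -> #|I| = M.
Proof. by rewrite /minor; case: (#|I| =P M) => // _; rewrite eqxx. Qed.

Lemma minor_row_free B I : minor B I != 0 -> row_free B.
Proof.
move=> mB; have /minor_neq0P injB := mB; apply/inj_row_free => x xB0.
by apply: (injB (minor_neq0_card mB)) => k _; rewrite xB0 mxE.
Qed.

Lemma submx_minor_eq0 B I v :
  minor B I != 0 -> (v <= B)%MS -> {in I, forall k, v 0 k = 0} -> v = 0.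
Proof.
move=> mB /submxP [x ->] v0; have /minor_neq0P injB := mB.
by rewrite (injB (minor_neq0_card mB) x v0) mul0mx.
Qed.

Lemma minor_pencil B D I :
  {q : {poly CC} | forall t, q.[t] = minor (B + t *: D) I}.
Proof.
have [cI | cI] := eqVneq #|I| M; last first.
  by exists 0 => t; rewrite horner0 /minor (negbTE cI).
pose g := minor_cols cI.
exists (\det (map_mx polyC (colsub g B) + 'X *: map_mx polyC (colsub g D))).
move=> t; rewrite minor_colsub linearD linearZ /= -horner_evalE -det_map_mx.
congr (\det _); apply/matrixP => i j; rewrite !mxE /= horner_evalE.
by rewrite hornerD mulrC hornerMX !hornerC mulrC.
Qed.

(* On the line from Bp to Bq, which keeps row i0 fixed, every minor is a
   polynomial in the parameter, non-zero at t = 0 or at t = 1; any non-root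
   of their product works. *)
Lemma exists_minors_neq0 (i0 : 'I_M) (w : 'rV[CC]_N) (Is : seq {set 'I_N}) :
  (forall I, I \in Is -> exists2 B, row i0 B = w & minor B I != 0) ->
  exists2 B, row i0 B = w & forall I, I \in Is -> minor B I != 0.
Proof.
elim: Is => [_ | I Is IH H]; first by exists (\matrix_(i < M) w) => //; rewrite rowK.
have [Bp rowBp mBp] : exists2 Bp, row i0 Bp = w & forall J, J \in Is -> minor Bp J != 0.
  by apply: IH => J JIs; apply: H; rewrite inE JIs orbT.
have [Bq rowBq mBq] := H I (mem_head _ _).
pose q J := sval (minor_pencil Bp (Bq - Bp) J).
have qE J t : (q J).[t] = minor (Bp + t *: (Bq - Bp)) J := svalP (minor_pencil _ _ J) t.
have : \prod_(J <- I :: Is) q J != 0.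
  rewrite prodf_seq_neq0; apply/allP => J /predU1P [-> | JIs] /=.
    have := qE I 1; rewrite scale1r addrC subrK => qI1.
    by apply: contraNneq mBq => qI0; rewrite -qI1 qI0 horner0.
  have := qE J 0; rewrite scale0r addr0 => qJ0.
  by apply: contraNneq (mBp J JIs) => q0; rewrite -qJ0 q0 horner0.
case/closed_nonrootP => t; rewrite /root horner_prod prodf_seq_neq0 => /allP qt.
exists (Bp + t *: (Bq - Bp)).
  by rewrite linearD linearZ linearB /= rowBp rowBq subrr scaler0 addr0.
by move=> J JIs; rewrite -qE; apply: qt.
Qed.

Lemma exists_row_minor_neq0 (i0 : 'I_M) (w : 'rV[CC]_N) I a :
  #|I| = M -> a \in I -> w 0 a != 0 ->
  exists2 B, row i0 B = w & minor B I != 0.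
Proof.
move=> cI aI wa0; set s := enum (I :\ a).
have size_s : size s = M.-1 by rewrite -cardE -cI (cardsD1 a I) aI.
have s_uniq : uniq s := enum_uniq _.
have sI (i : 'I_M.-1) : nth a s i \in I :\ a by rewrite -mem_enum mem_nth ?size_s.
pose B := \matrix_(i, k)
  if unlift i0 i is Some i' then (k == nth a s i')%:R else w 0 k.
exists B; first by apply/rowP => k; rewrite !mxE unlift_none.
apply/(minor_neq0P _ cI) => x xB0.
have xBE k : (x *m B) 0 k =
    x 0 i0 * w 0 k + \sum_(i < M.-1) x 0 (lift i0 i) * (k == nth a s i)%:R.
  rewrite mxE (bigD1_ord i0) //= !mxE unlift_none; congr (_ + _).
  by apply: eq_bigr => i _; rewrite !mxE liftK.
have xi0 : x 0 i0 = 0.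
  have := xB0 a aI; rewrite xBE big1 ?addr0 => [/eqP|i _].
    by rewrite mulf_eq0 (negbTE wa0) orbF => /eqP.
  by have := sI i; rewrite !inE eq_sym => /andP [/negbTE -> _]; rewrite mulr0.
apply/rowP => j; rewrite [RHS]mxE; case: (unliftP i0 j) => [i -> | ->] //.
have := sI i; rewrite !inE => /andP [_ /xB0].
rewrite xBE xi0 mul0r add0r (bigD1 i) //= eqxx mulr1 big1 ?addr0 // => i' i'i.
by rewrite (nth_uniq a _ _ s_uniq) ?size_s // (inj_eq val_inj) eq_sym (negbTE i'i) mulr0.
Qed.

End Minors.

Lemma exists_subset_card (T : finType) (X : {set T}) m :
  (m <= #|X|)%N -> exists2 J : {set T}, J \subset X & #|J| = m.
Proof.
elim: m => [|m IH] mX; first by exists set0; rewrite ?sub0set ?cards0.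
have [J JX cJ] := IH (ltnW mX).
have /set0Pn [x] : X :\: J != set0.
  by rewrite -card_gt0 cardsD (setIidPr JX) cJ subn_gt0.
rewrite inE => /andP [xJ xX]; exists (x |: J); last by rewrite cardsU1 xJ cJ.
by rewrite subUset sub1set xX.
Qed.

Lemma exists_card_set_through (T : finType) (X : {set T}) (a : T) m :
  (m < #|X|)%N -> exists I : {set T}, [/\ #|I| = m.+1, a \in I & I \subset a |: X].
Proof.
move=> mX; have : (m <= #|X :\ a|)%N.
  by move: mX; rewrite (cardsD1 a X); case: (a \in X) => /= [|/ltnW].
case/exists_subset_card => J JX cJ; have aJ : a \notin J.
  by apply/negP => /(subsetP JX); rewrite !inE eqxx.
exists (a |: J); split; rewrite ?cardsU1 ?aJ ?cJ ?setU11 //.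
by apply: setUS; apply: subset_trans JX (subD1set X a).
Qed.

Lemma sub_LS N (S : {set 'I_N}) (v : 'rV[CC]_N) :
  (v <= LS S)%MS <-> (forall k, k \notin S -> v 0 k = 0).
Proof.
split=> [/submxP [x ->] k kS | v0]; first by rewrite mul_mx_diag !mxE (negbTE kS) mulr0.
have -> : v = v *m LS S; last exact: submxMl.
apply/rowP => k; rewrite mul_mx_diag !mxE.
by case: ifPn => kS; rewrite ?mulr1 // mulr0 v0.
Qed.

Lemma card_first N K : (K <= N)%N -> #|first_set N K| = K.
Proof.
move=> KN; have -> : first_set N K = [set widen_ord KN i | i : 'I_K].
  apply/setP => k; rewrite inE; apply/idP/imsetP => [kK | [i _ ->]] //=.
  by exists (Ordinal kK) => //; apply: val_inj.
by rewrite card_imset ?card_ord // => i j /(congr1 val) /= /val_inj.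
Qed.

Definition meeting N M (A : {set 'I_N}) : pred {set 'I_N} :=
  [pred I : {set 'I_N} | (#|I| == M) && (I :&: A != set0)].

Section MeetingMinors.

Variables (N M : nat) (A : {set 'I_N}) (B : 'M[CC]_(M, N)).
Hypotheses (M_gt0 : (0 < M)%N) (minorB : forall I, meeting M A I -> minor B I != 0).

Lemma meeting_minor_through a (X : {set 'I_N}) :
  a \in A -> (M <= #|X|)%N -> exists I, [/\ minor B I != 0, a \in I & I \subset a |: X].
Proof.
move=> aA MX; have [|I [cI aI IX]] := exists_card_set_through a (m := M.-1) (X := X).
  by rewrite prednK.
exists I; split=> //; apply: minorB; rewrite /meeting /= cI prednK // eqxx /=.
by apply/set0Pn; exists a; rewrite inE aI.
Qed.

Lemma meeting_minors_cap_line (w : 'rV[CC]_N) j0 :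
  in_LS_star A w -> (w <= B)%MS -> j0 \in A -> (M <= #|~: A|)%N ->
  forall v : 'rV[CC]_N, (v <= B)%MS /\ (v <= LS A)%MS <-> exists c, v = c *: w.
Proof.
move=> [wA w0] wB j0A MA v.
split=> [[vB /sub_LS vA] | [c ->]]; last by split; apply: scalemx_sub.
move/sub_LS: wA => wA.
have [I [mI j0I IA]] := meeting_minor_through j0A MA.
exists (v 0 j0 / w 0 j0); apply/eqP; rewrite -subr_eq0; apply/eqP.
apply: (submx_minor_eq0 mI).
  by rewrite -scaleNr; apply: addmx_sub => //; apply: scalemx_sub.
move=> k /(subsetP IA); rewrite !inE => /predU1P [-> | kA].
  by rewrite !mxE divfK ?subrr ?w0.
by rewrite !mxE (vA k kA) (wA k kA) mulr0 subrr.
Qed.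

Lemma meeting_minors_cap_trivial (S : {set 'I_N}) :
  #|S| = #|A| -> S != A -> (M <= #|~: S|)%N ->
  forall v : 'rV[CC]_N, (v <= B)%MS -> (v <= LS S)%MS -> v = 0.
Proof.
move=> cS SA MS v vB /sub_LS vS.
have /subsetPn [a aA aS] : ~~ (A \subset S).
  by apply: contra SA => AS; rewrite eq_sym -(subset_leqif_cards AS).2 cS.
have [I [mI _ IS]] := meeting_minor_through aA MS.
apply: (submx_minor_eq0 mI vB) => k /(subsetP IS); rewrite !inE.
by case/predU1P => [-> | kS]; apply: vS.
Qed.

End MeetingMinors.

Lemma meval_plucker_prod_neq0 M N (P : pred {set 'I_N}) (B : 'M[CC]_(M, N)) :
  (\prod_(k | P (enum_val k)) 'X_k : {mpoly CC[nPl N]}).@[plucker B] != 0 <->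
  (forall I, P I -> minor B I != 0).
Proof.
rewrite rmorph_prod /=; under eq_bigr => k _ do rewrite mevalXU.
split=> [/prodf_neq0 mB I PI | mB]; last by apply/prodf_neq0 => k Pk; apply: mB.
by have := mB (enum_rank I); rewrite /plucker enum_rankK; apply.
Qed.

Lemma dhomog_prod_mpolyX (R : nzRingType) n (P : pred 'I_n) :
  (\prod_(k | P k) 'X_k : {mpoly R[n]}) \is #|P|.-homog.
Proof.
have [e <- _ [_ <-]] := big_enumP P.
elim: e => [|k s IH]; first by rewrite big_nil dhomog1.
rewrite big_cons /= -add1n; apply: dhomogM IH; rewrite dhomogX; exact/eqP/mdeg1.
Qed.

Lemma zariski_closed_zero_locus M N (w : 'rV[CC]_N) d (p : {mpoly CC[nPl N]}) :
  p \is d.-homog -> zariski_closed_in_Grw w (fun B : 'M_(M, N) => p.@[plucker B] = 0).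
Proof.
move=> hp; exists (fun q => q = p); split=> [q -> | B _]; first by exists d.
by split=> [p0 q -> | /(_ p erefl)].
Qed.

Theorem lemma3p8 (N K M : nat) (hK : (0 < K)%N) (hM : (0 < M)%N)
    (hKNM : (K <= N - M)%N) (w : 'rV[CC]_N)
    (hw : in_LS_star (first_set N K) w) :
  generic_in_Grw w (fun B : 'M[CC]_(M, N) =>
    (* (1) L ∩ L_{1..K} is the line spanned by w *)
    (forall v : 'rV[CC]_N,
       (v <= B)%MS /\ (v <= LS (first_set N K))%MS <-> exists c : CC, v = c *: w)
    /\
    (* (2) L ∩ L_S = 0 for every S with |S| = K, S <> {1..K} *)
    (forall S : {set 'I_N}, #|S| = K -> S <> first_set N K ->
       forall v : 'rV[CC]_N, (v <= B)%MS -> (v <= LS S)%MS -> v = 0)).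
Proof.
set A := first_set N K; have [_ w0] := hw.
have cA : #|A| = K by apply: card_first; lia.
have MC (S : {set 'I_N}) : #|S| = K -> (M <= #|~: S|)%N.
  by move=> cS; move: (cardsC S); rewrite cS card_ord; lia.
have /set0Pn [j0 j0A] : A != set0 by rewrite -card_gt0 cA.
pose p : {mpoly CC[nPl N]} := \prod_(k | meeting M A (enum_val k)) 'X_k.
exists (fun B => p.@[plucker B] = 0); split.
- exact: zariski_closed_zero_locus (dhomog_prod_mpolyX _ _).
- have witness I : I \in enum (meeting M A) ->
      exists2 B : 'M_(M, N), row (Ordinal hM) B = w & minor B I != 0.
    rewrite mem_enum inE => /andP [/eqP cI /set0Pn [a]].
    by rewrite inE => /andP [aI aA]; apply: exists_row_minor_neq0 cI aI (w0 a aA).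
  have [B rowB mB] := exists_minors_neq0 witness.
  have {}mB I : meeting M A I -> minor B I != 0 by move=> mI; apply: mB; rewrite mem_enum.
  have [I [mI _ _]] := meeting_minor_through hM mB j0A (MC A cA).
  exists B; split; last by apply/eqP/meval_plucker_prod_neq0.
  by split; [apply: minor_row_free mI | rewrite -rowB row_sub].
- move=> B [_ wB] /eqP /meval_plucker_prod_neq0 mB; split.
    exact: meeting_minors_cap_line hw wB j0A (MC A cA).
  move=> S cS SA; apply: (meeting_minors_cap_trivial hM mB (S := S)).
  + by rewrite cS cA.
  + exact/eqP.
  + exact: MC.
Qed.
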